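(* Let $m\ge2$, $d\ge1$, $\sigma$ an invertible real $m\times m$ matrix and $A_1,\dots,A_d$ real $m\times m$ matrices, $G_l:=A_l\sigma-\sigma^*A_l^*$, and assume the Hörmander condition: there is $\lambda>0$ with $\sum_{i,j=1}^m|\sum_{l=1}^d(G_l)_{ij}a_l|^2\ge\lambda|a|^2$ for all $a\in\mathbb{R}^d$. Then there are constants $c_1(G),c_2(G)>0$ depending only on $G_1,\dots,G_d$ such that for all $f\in C^3(\mathbb{R}^{m+d})$ and $r>0$, $$\Gamma_2(f)+r\,\Gamma_2^Z(f)\ge\frac{(Lf)^2}{m}+\frac{c_2(G)\,\Gamma^Z(f)}{4}-\frac{c_1(G)}{r}\Gamma(f).$$
   Context: On $\mathbb{R}^{m+d}$ with coordinates $(x,y)$: $X_i=\sum_{k=1}^m\sigma_{ki}\partial_{x_k}+\sum_{l=1}^d(A_lx)_i\partial_{y_l}$ ($1\le i\le m$), $L=\frac12\sum_{i=1}^mX_i^2$, $\Gamma(f,g)=\frac12\sum_{i=1}^m(X_if)(X_ig)$, $\Gamma^Z(f,g)=\frac12\sum_{l=1}^d(\partial_{y_l}f)(\partial_{y_l}g)$, $\Gamma(f)=\Gamma(f,f)$, $\Gamma^Z(f)=\Gamma^Z(f,f)$, $\Gamma_2(f)=\frac12L\Gamma(f,f)-\Gamma(f,Lf)$, $\Gamma_2^Z(f)=\frac12L\Gamma^Z(f,f)-\Gamma^Z(f,Lf)$. *)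

From HB Require Import structures.
From mathcomp Require Import all_boot all_order all_algebra.
From mathcomp Require Import all_classical all_reals all_analysis.
Set Implicit Arguments. Unset Strict Implicit. Unset Printing Implicit Defensive.
Import Order.TTheory GRing.Theory Num.Theory.
Import numFieldNormedType.Exports.
Local Open Scope ring_scope.

(* Points of R^{m+d} are row vectors p : 'rV_(m+d); the x-coordinates are
   p 0 (lshift d k), k < m, and the y-coordinates are p 0 (rshift m l), l < d. *)
Section Carre.
Variable R : realType.
Variables m d : nat.
Local Notation P := 'rV[R]_(m + d).

Definition ebase (j : 'I_(m + d)) : P := delta_mx 0 j.

Definition partial (j : 'I_(m + d)) (g : P -> R) : P -> R :=
  fun p => derive g p (ebase j).

Definition dx (k : 'I_m) (g : P -> R) : P -> R := partial (lshift d k) g.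
Definition dy (l : 'I_d) (g : P -> R) : P -> R := partial (rshift m l) g.

Definition C3 (f : P -> R) : Prop :=
  continuous f /\
  (forall j p, derivable f p (ebase j)) /\
  (forall j, continuous (partial j f)) /\
  (forall j k p, derivable (partial j f) p (ebase k)) /\
  (forall j k, continuous (partial k (partial j f))) /\
  (forall j k l p, derivable (partial k (partial j f)) p (ebase l)) /\
  (forall j k l, continuous (partial l (partial k (partial j f)))).

Variable sigma : 'M[R]_m.
Variable A : 'I_d -> 'M[R]_m.

Definition Xop (i : 'I_m) (g : P -> R) : P -> R := fun p =>
  \sum_(k < m) sigma k i * dx k g p
  + \sum_(l < d) (\sum_(k < m) A l i k * p 0 (lshift d k)) * dy l g p.

Definition Lop (g : P -> R) : P -> R := fun p =>
  2^-1 * \sum_(i < m) Xop i (Xop i g) p.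

Definition Gam (f g : P -> R) : P -> R := fun p =>
  2^-1 * \sum_(i < m) Xop i f p * Xop i g p.

Definition GamZ (f g : P -> R) : P -> R := fun p =>
  2^-1 * \sum_(l < d) dy l f p * dy l g p.

Definition Gam2 (f : P -> R) : P -> R := fun p =>
  2^-1 * Lop (Gam f f) p - Gam f (Lop f) p.

Definition Gam2Z (f : P -> R) : P -> R := fun p =>
  2^-1 * Lop (GamZ f f) p - GamZ f (Lop f) p.

End Carre.

Definition Gmat (R : realType) (m d : nat) (sigma : 'M[R]_m)
  (A : 'I_d -> 'M[R]_m) : 'I_d -> 'M[R]_m :=
  fun l => A l *m sigma - sigma^T *m (A l)^T.

From HB Require Import structures.
From mathcomp Require Import all_boot all_order all_algebra.
From mathcomp Require Import all_classical all_reals all_analysis.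
From mathcomp Require Import ring lra.
Import Order.TTheory GRing.Theory Num.Theory.
Import numFieldNormedType.Exports.
Local Open Scope ring_scope.

(* Put B i j := X_j X_i f.  Leibniz' rule gives
     4 Gamma_2(f) = sum_ij B_ij^2 + sum_ij X_i f (X_j X_j X_i f - X_i X_j X_j f),
     4 Gamma_2^Z(f) = sum_jl (X_j d_{y_l} f)^2,
   the latter because d_y commutes with every X_j (their coefficients do not
   depend on y).  Since [X_j, X_i] = sum_l (G_l)_ij d_{y_l}, the antisymmetric
   part of B is G.d_y f, which the Hormander condition bounds below by
   lambda |d_y f|^2; the diagonal of B sums to 2 Lf, whence (Lf)^2/m by
   Cauchy-Schwarz.  The third order commutator turns the remaining term into
   2 sum X_i f (G_l)_ij X_j d_{y_l} f, which Young's inequality absorbs into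
   r Gamma_2^Z(f) at the price of c_1 Gamma(f) / r with c_1 = |G|^2 / 2;
   c_2 = lambda / 2 for a Hormander constant lambda chosen from G alone.
   The commutator identities need symmetric second and third derivatives,
   which the C^3 hypothesis provides through Schwarz's theorem. *)

(** * Sums of squares and the Hormander condition *)

Section SumsOfSquares.
Context {R : realFieldType}.

Lemma cauchy_schwarz {n} (x y : 'I_n -> R) :
  (\sum_i x i * y i) ^+ 2 <= (\sum_i x i ^+ 2) * (\sum_i y i ^+ 2).
Proof.
have lagrange : 2 * ((\sum_i x i ^+ 2) * (\sum_i y i ^+ 2) - (\sum_i x i * y i) ^+ 2)
    = \sum_i \sum_k (x i * y k - x k * y i) ^+ 2.
  have -> : \sum_i \sum_k (x i * y k - x k * y i) ^+ 2
      = \sum_i \sum_k x i ^+ 2 * y k ^+ 2 + \sum_i \sum_k x k ^+ 2 * y i ^+ 2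
        - 2 * \sum_i \sum_k (x i * y i) * (x k * y k).
    rewrite mulr_sumr -big_split -sumrB; apply: eq_bigr => i _.
    by rewrite mulr_sumr -big_split -sumrB; apply: eq_bigr => k _ /=; ring.
  by rewrite [X in _ + X - _]exchange_big expr2 !big_distrlr /=; ring.
have : 0 <= \sum_i \sum_k (x i * y k - x k * y i) ^+ 2.
  by do 2!(apply: sumr_ge0 => ? _); exact: sqr_ge0.
by rewrite -lagrange pmulr_rge0 // subr_ge0.
Qed.

Lemma sqr_sum_le {n} (x : 'I_n -> R) : (\sum_i x i) ^+ 2 <= n%:R * \sum_i x i ^+ 2.
Proof.
have := cauchy_schwarz (fun _ => 1) x.
by rewrite expr1n sumr_const card_ord; under eq_bigr do rewrite mul1r.
Qed.

Lemma sum_sqr_symD_antisym {n} (B : 'I_n -> 'I_n -> R) :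
  \sum_i \sum_j (B i j + B j i) ^+ 2 + \sum_i \sum_j (B i j - B j i) ^+ 2
  = 4 * \sum_i \sum_j B i j ^+ 2.
Proof.
have -> : \sum_i \sum_j (B i j + B j i) ^+ 2 + \sum_i \sum_j (B i j - B j i) ^+ 2
    = 2 * \sum_i \sum_j B i j ^+ 2 + 2 * \sum_i \sum_j B j i ^+ 2.
  rewrite !mulr_sumr -!big_split; apply: eq_bigr => i _.
  by rewrite !mulr_sumr -!big_split; apply: eq_bigr => j _ /=; ring.
by rewrite [X in _ + 2 * X]exchange_big /=; ring.
Qed.

Definition hormander {m d} (G : 'I_d -> 'M[R]_m) (lam : R) := 0 < lam /\
  forall a : 'I_d -> R, lam * \sum_(l < d) a l ^+ 2 <=
     \sum_(i < m) \sum_(j < m) (\sum_(l < d) G l i j * a l) ^+ 2.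

Definition frobenius {m d} (G : 'I_d -> 'M[R]_m) : R :=
  \sum_(l < d) \sum_(i < m) \sum_(j < m) G l i j ^+ 2.

Lemma hormander_le_frobenius {m d} {G : 'I_d -> 'M[R]_m} {lam} :
  (0 < d)%N -> hormander G lam -> lam <= frobenius G.
Proof.
move=> d_gt0 [_ hG]; pose l0 := Ordinal d_gt0.
have pick i j : \sum_l G l i j * (l == l0)%:R = G l0 i j.
  by rewrite (bigD1 l0) //= mulr1 big1 ?addr0 // => l /negbTE ->; rewrite mulr0.
have := hG (fun l => (l == l0)%:R).
rewrite (bigD1 l0) //= big1 => [|l /negbTE ->]; last by rewrite expr0n.
under [X in _ <= X -> _]eq_bigr do under eq_bigr do rewrite pick.
rewrite expr1n addr0 mulr1 => /le_trans; apply.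
rewrite /frobenius (bigD1 l0) //= lerDl.
by do 3!(apply: sumr_ge0 => ? _); exact: sqr_ge0.
Qed.

Lemma sum_sqr_ge_trace_antisym {m d} {G : 'I_d -> 'M[R]_m} {lam}
    {B : 'I_m -> 'I_m -> R} {z : 'I_d -> R} :
  (0 < m)%N -> hormander G lam ->
  (forall i j, B i j - B j i = \sum_l G l i j * z l) ->
  (\sum_i B i i) ^+ 2 / m%:R + lam / 4 * \sum_l z l ^+ 2 <= \sum_i \sum_j B i j ^+ 2.
Proof.
move=> m_gt0 [_ hG] antiB.
have trace_le : (\sum_i B i i) ^+ 2 / m%:R <= \sum_i B i i ^+ 2.
  by rewrite ler_pdivrMr ?ltr0n // mulrC sqr_sum_le.
have diag_le : 4 * \sum_i B i i ^+ 2 <= \sum_i \sum_j (B i j + B j i) ^+ 2.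
  rewrite mulr_sumr; apply: ler_sum => i _.
  have -> : 4 * B i i ^+ 2 = (B i i + B i i) ^+ 2 by ring.
  rewrite (bigD1 i) //= lerDl.
  by apply: sumr_ge0 => j _; exact: sqr_ge0.
have antisym_ge : lam * \sum_l z l ^+ 2 <= \sum_i \sum_j (B i j - B j i) ^+ 2.
  by under [X in _ <= X]eq_bigr do under eq_bigr do rewrite antiB.
have := sum_sqr_symD_antisym B; lra.
Qed.

Lemma cross_term_ge {m d} (G : 'I_d -> 'M[R]_m) (a : 'I_m -> R) (C : 'I_m -> 'I_d -> R) {r} :
  0 < r ->
  - (frobenius G / r * \sum_i a i ^+ 2) <=
  2 * (\sum_i \sum_j a i * \sum_l G l i j * C j l) + r * \sum_j \sum_l C j l ^+ 2.
Proof.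
move=> r_gt0; pose u j l := \sum_i a i * G l i j.
have -> : \sum_i \sum_j a i * \sum_l G l i j * C j l = \sum_j \sum_l u j l * C j l.
  under eq_bigr do under eq_bigr do rewrite mulr_sumr.
  rewrite exchange_big; apply: eq_bigr => j _ /=.
  rewrite exchange_big; apply: eq_bigr => l _ /=.
  by rewrite mulr_suml; apply: eq_bigr => i _; rewrite mulrA.
have u_le : \sum_j \sum_l u j l ^+ 2 <= frobenius G * \sum_i a i ^+ 2.
  have -> : frobenius G = \sum_j \sum_l \sum_i G l i j ^+ 2.
    by rewrite /frobenius; under eq_bigr do rewrite exchange_big; rewrite exchange_big.
  rewrite mulr_suml; apply: ler_sum => j _; rewrite mulr_suml; apply: ler_sum => l _.
  by rewrite mulrC cauchy_schwarz.
have young : 0 <= (\sum_j \sum_l u j l ^+ 2) / r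
    + 2 * (\sum_j \sum_l u j l * C j l) + r * \sum_j \sum_l C j l ^+ 2.
  have -> : (\sum_j \sum_l u j l ^+ 2) / r + 2 * (\sum_j \sum_l u j l * C j l)
      + r * \sum_j \sum_l C j l ^+ 2 = \sum_j \sum_l (u j l + r * C j l) ^+ 2 / r.
    rewrite mulr_suml !mulr_sumr -!big_split; apply: eq_bigr => j _ /=.
    rewrite mulr_suml !mulr_sumr -!big_split; apply: eq_bigr => l _ /=.
    by field; rewrite gt_eqF.
  by do 2!(apply: sumr_ge0 => ? _); rewrite divr_ge0 ?sqr_ge0 ?ltW.
have u_le_r : (\sum_j \sum_l u j l ^+ 2) / r <= frobenius G * (\sum_i a i ^+ 2) / r.
  by rewrite ler_pM2r ?invr_gt0.
rewrite mulrAC; lra.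
Qed.

(* The theorem at one point, with [B i j = X_j X_i f], [z l = d_{y_l} f],
   [a i = X_i f] and [C j l = X_j d_{y_l} f]. *)
Lemma gamma2_sum_bound {m d} (G : 'I_d -> 'M[R]_m) lam r (B : 'I_m -> 'I_m -> R)
    (z : 'I_d -> R) (a : 'I_m -> R) (C : 'I_m -> 'I_d -> R) :
  (0 < m)%N -> hormander G lam -> 0 < r ->
  (forall i j, B i j - B j i = \sum_l G l i j * z l) ->
  (2^-1 * \sum_i B i i) ^+ 2 / m%:R + lam / 2 * (2^-1 * \sum_l z l * z l) / 4
    - frobenius G / 2 / r * (2^-1 * \sum_i a i * a i)
  <= 4^-1 * \sum_i \sum_j B i j ^+ 2
     + 4^-1 * \sum_i \sum_j a i * (2 * \sum_l G l i j * C j l)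
     + r * (4^-1 * \sum_j \sum_l C j l ^+ 2).
Proof.
move=> m_gt0 hG r_gt0 antiB.
have := sum_sqr_ge_trace_antisym m_gt0 hG antiB.
have := cross_term_ge G a C r_gt0.
under [\sum_l z l * z l]eq_bigr do rewrite -expr2.
under [\sum_i a i * a i]eq_bigr do rewrite -expr2.
under [X in _ + 4^-1 * X + _]eq_bigr do under eq_bigr do rewrite mulrCA.
under [X in _ + 4^-1 * X + _]eq_bigr do rewrite -mulr_sumr.
rewrite -[X in _ + 4^-1 * X + _]mulr_sumr.
lra.
Qed.

Lemma gamma2_sum_identity {n k} (a c c' : 'I_n -> 'I_k -> R) (u : 'I_k -> R) :
  2^-1 * (2^-1 * \sum_j \sum_i (a j i ^+ 2 + u i * c j i))
    - 2^-1 * \sum_i u i * (2^-1 * \sum_j c' j i)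
  = 4^-1 * \sum_i \sum_j a j i ^+ 2 + 4^-1 * \sum_i \sum_j u i * (c j i - c' j i).
Proof.
rewrite exchange_big /= !mulr_sumr -sumrB -big_split /=; apply: eq_bigr => i _.
rewrite !mulr_sumr -sumrB -big_split /=; by apply: eq_bigr => j _; field.
Qed.

End SumsOfSquares.

(** * Schwarz's theorem *)

Section Schwarz.
Context {R : realType} {V : normedModType R}.
Implicit Types (g : V -> R) (a e p u v : V).

Lemma is_derive_line {g a e t} : derivable g (a + t *: e) e ->
  is_derive t 1 (fun s : R => g (a + s *: e)) ('D_e g (a + t *: e)).
Proof.
have quotE : (fun h : R => h^-1 *: (((fun s => g (a + s *: e)) \o shift t) (h *: 1)
      - g (a + t *: e))) = (fun h => h^-1 *: ((g \o shift (a + t *: e)) (h *: e) - g (a + t *: e))).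
  apply/funext => h /=; congr (_ *: (g _ - _)).
  by rewrite scalerDl /GRing.scale /= mulr1 addrCA addrC.
move=> dg; split; first by rewrite /derivable quotE.
by rewrite /derive quotE.
Qed.

Lemma mvt_line {g a e h} : 0 < h -> (forall t, derivable g (a + t *: e) e) ->
  exists2 t, 0 < t < h & g (a + h *: e) - g a = h * 'D_e g (a + t *: e).
Proof.
move=> h_gt0 dg.
have [|t] := MVT h_gt0 (fun t _ => is_derive_line (dg t)).
- apply: continuous_subspaceT => t.
  have /derivable1_diffP := @ex_derive _ _ _ _ _ _ _ (is_derive_line (dg t)).
  exact: differentiable_continuous.
- rewrite in_itv /= => t_in; rewrite scale0r addr0 subr0 => ->.
  by exists t; rewrite // mulrC.
Qed.

Lemma is_derive_translate {g q w e} : derivable g (q + w) e ->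
  is_derive q e (fun x => g (x + w)) ('D_e g (q + w)).
Proof.
have quotE : (fun h : R => h^-1 *: (((fun x => g (x + w)) \o shift q) (h *: e) - g (q + w)))
    = (fun h => h^-1 *: ((g \o shift (q + w)) (h *: e) - g (q + w))).
  by apply/funext => h /=; rewrite addrA.
move=> dg; split; first by rewrite /derivable quotE.
by rewrite /derive quotE.
Qed.

Lemma second_difference_mvt {g u v} p {h} : 0 < h ->
  (forall q, derivable g q u) -> (forall q, derivable ('D_u g) q v) ->
  exists t s, [/\ 0 < t < h, 0 < s < h &
    g (p + h *: u + h *: v) - g (p + h *: u) - g (p + h *: v) + g p
      = h ^+ 2 * 'D_v ('D_u g) (p + t *: u + s *: v)].
Proof.
move=> h_gt0 dg ddg.
pose G q := g (q + h *: v) - g q.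
have dG q : is_derive q u G ('D_u g (q + h *: v) - 'D_u g q).
  exact: is_deriveB (is_derive_translate _) (derivableP _).
have [t t_in Gt] := mvt_line h_gt0 (fun t => @ex_derive _ _ _ _ _ _ _ (dG (p + t *: u))).
have [s s_in Ds] := mvt_line h_gt0 (fun s => ddg (p + t *: u + s *: v)).
exists t, s; split=> //.
move: Gt; rewrite /G derive_val Ds => Gt.
by rewrite expr2 -mulrA -Gt (addrAC p); ring.
Qed.

Lemma eq_of_coincide_near {F1 F2 : V -> R} {p} :
  {for p, continuous F1} -> {for p, continuous F2} ->
  (forall eps, 0 < eps ->
     exists q1 q2, [/\ `|p - q1| < eps, `|p - q2| < eps & F1 q1 = F2 q2]) ->
  F1 p = F2 p.
Proof.
move=> cF1 cF2 coincide; apply/eqP; rewrite -subr_eq0 -normr_le0.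
apply/ler_addgt0Pr => eps eps_gt0; rewrite add0r.
have eps2_gt0 : 0 < eps / 2 by rewrite divr_gt0.
have /nbhs_normP [r r_gt0 close] :
    \forall q \near p, `|F1 p - F1 q| < eps / 2 /\ `|F2 p - F2 q| < eps / 2.
  near=> q; split; near: q.
  - exact: (cvgrPdist_lt _ _).1 cF1 _ eps2_gt0.
  - exact: (cvgrPdist_lt _ _).1 cF2 _ eps2_gt0.
have [q1 [q2 [/close [near1 _] /close [_ near2] F12]]] := coincide r r_gt0.
rewrite (_ : F1 p - F2 p = (F1 p - F1 q1) - (F2 p - F2 q2)); last by rewrite F12; ring.
by rewrite (le_trans (ler_normB _ _)) // [eps]splitr lerD // ltW.
Unshelve. all: by end_near.
Qed.

Theorem schwarz {g u v p} :
  (forall q, derivable g q u) -> (forall q, derivable g q v) ->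
  (forall q, derivable ('D_u g) q v) -> (forall q, derivable ('D_v g) q u) ->
  {for p, continuous ('D_v ('D_u g))} -> {for p, continuous ('D_u ('D_v g))} ->
  'D_v ('D_u g) p = 'D_u ('D_v g) p.
Proof.
move=> du dv duv dvu cuv cvu.
apply: (eq_of_coincide_near cuv cvu) => eps eps_gt0.
have N_gt0 : 0 < `|u| + `|v| + 1 by rewrite ltr_wpDl ?addr_ge0.
pose h := eps / (`|u| + `|v| + 1).
have h_gt0 : 0 < h by rewrite divr_gt0.
have close t s : 0 < t < h -> 0 < s < h -> `|p - (p + t *: u + s *: v)| < eps.
  move=> /andP[t_gt0 t_lt] /andP[s_gt0 s_lt].
  rewrite -addrA opprD addNKr normrN (le_lt_trans (ler_normD _ _)) //.
  rewrite !normrZ !gtr0_norm // (@lt_le_trans _ _ (h * (`|u| + `|v| + 1))) //.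
    have := ler_wpM2r (normr_ge0 u) (ltW t_lt).
    have := ler_wpM2r (normr_ge0 v) (ltW s_lt).
    rewrite !mulrDr mulr1; lra.
  by rewrite /h divfK ?gt_eqF.
have [t1 [s1 [t1_in s1_in E1]]] := second_difference_mvt p h_gt0 du duv.
have [t2 [s2 [t2_in s2_in E2]]] := second_difference_mvt p h_gt0 dv dvu.
exists (p + t1 *: u + s1 *: v), (p + t2 *: v + s2 *: u).
split; [exact: close | rewrite (addrAC p); exact: close |].
apply: (@mulfI _ (h ^+ 2)); first by rewrite expf_neq0 ?gt_eqF.
apply: etrans (esym E1) (etrans _ E2); rewrite (addrAC p (h *: v)).
by rewrite -!addrA [- _ + (- _ + _)]addrCA.
Qed.

End Schwarz.

(** * Vector fields with variable coefficients *)

Section VectorFields.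
Context {R : realType} {m d : nat}.
Local Notation P := 'rV[R]_(m + d).
Local Notation e := (@ebase R m d).
Implicit Types (g u v : P -> R) (q : P).

Definition coord_derivable g := forall a q, derivable g q (e a).

Definition sym_hessian g q := forall a b, partial b (partial a g) q = partial a (partial b g) q.

Lemma partialD {u v a q} : derivable u q (e a) -> derivable v q (e a) ->
  partial a (fun x => u x + v x) q = partial a u q + partial a v q.
Proof. exact: deriveD. Qed.

Lemma partialB {u v a q} : derivable u q (e a) -> derivable v q (e a) ->
  partial a (fun x => u x - v x) q = partial a u q - partial a v q.
Proof. exact: deriveB. Qed.

Lemma partialM {u v a q} : derivable u q (e a) -> derivable v q (e a) ->
  partial a (fun x => u x * v x) q = u q * partial a v q + v q * partial a u q.
Proof. exact: deriveM. Qed.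

Lemma partialZ (k : R) {u a q} : derivable u q (e a) ->
  partial a (fun x => k * u x) q = k * partial a u q.
Proof. by move=> du; exact: (deriveMl k du). Qed.

Lemma partial_sum {n} {u : 'I_n -> P -> R} {a q} : (forall i, derivable (u i) q (e a)) ->
  partial a (fun x => \sum_i u i x) q = \sum_i partial a (u i) q.
Proof.
move=> du; rewrite -derive_sum //; congr derive.
by apply/funext => x; rewrite fct_sumE.
Qed.

Lemma coord_derivableD {u v} : coord_derivable u -> coord_derivable v ->
  coord_derivable (fun x => u x + v x).
Proof. by move=> du dv a q; exact: derivableD. Qed.

Lemma coord_derivableM {u v} : coord_derivable u -> coord_derivable v ->
  coord_derivable (fun x => u x * v x).
Proof. by move=> du dv a q; exact: derivableM. Qed.

Lemma coord_derivableZ (k : R) {u} : coord_derivable u -> coord_derivable (fun x => k * u x).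
Proof. by move=> du a q; exact: derivableM (derivable_cst _ _ _) (du a q). Qed.

Lemma coord_derivable_sum {n} {u : 'I_n -> P -> R} : (forall i, coord_derivable (u i)) ->
  coord_derivable (fun x => \sum_i u i x).
Proof.
move=> du a q; have -> : (fun x => \sum_i u i x) = \sum_i u i.
  by apply/funext => x; rewrite fct_sumE.
by apply: derivable_sum => i; exact: du.
Qed.

Definition vfield (c : 'I_(m + d) -> P -> R) g : P -> R :=
  fun q => \sum_a c a q * partial a g q.

Implicit Types c : 'I_(m + d) -> P -> R.

Lemma vfieldM c u v q : coord_derivable u -> coord_derivable v ->
  vfield c (fun x => u x * v x) q = u q * vfield c v q + v q * vfield c u q.
Proof.
move=> du dv; rewrite /vfield !mulr_sumr -big_split.
by apply: eq_bigr => a _ /=; rewrite partialM //; ring.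
Qed.

Lemma vfieldB c u v q : coord_derivable u -> coord_derivable v ->
  vfield c (fun x => u x - v x) q = vfield c u q - vfield c v q.
Proof.
move=> du dv; rewrite /vfield -sumrB.
by apply: eq_bigr => a _; rewrite partialB // mulrBr.
Qed.

Lemma vfieldZ c (k : R) u q : coord_derivable u ->
  vfield c (fun x => k * u x) q = k * vfield c u q.
Proof.
move=> du; rewrite /vfield mulr_sumr.
by apply: eq_bigr => a _; rewrite partialZ // mulrCA.
Qed.

Lemma vfield_sum c n (u : 'I_n -> P -> R) q : (forall i, coord_derivable (u i)) ->
  vfield c (fun x => \sum_i u i x) q = \sum_i vfield c (u i) q.
Proof.
move=> du; rewrite /vfield exchange_big /=.
by apply: eq_bigr => a _; rewrite partial_sum ?mulr_sumr // => i; exact: du.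
Qed.

Section Coefficients.
Variables (c : 'I_(m + d) -> P -> R) (g : P -> R).
Hypothesis dc : forall a, coord_derivable (c a).
Hypothesis dg : forall a, coord_derivable (partial a g).

Lemma partial_vfield b : partial b (vfield c g) =
  fun q => \sum_a (partial b (c a) q * partial a g q + c a q * partial b (partial a g) q).
Proof.
apply/funext => q; rewrite partial_sum => [|a]; last exact: coord_derivableM.
by apply: eq_bigr => a _; rewrite partialM; [ring | exact: dc | exact: dg].
Qed.

Lemma coord_derivable_vfield : coord_derivable (vfield c g).
Proof. by apply: coord_derivable_sum => a; exact: coord_derivableM. Qed.

Lemma coord_derivable_partial_vfield b :
  (forall a, coord_derivable (partial b (c a))) ->
  (forall a, coord_derivable (partial b (partial a g))) ->
  coord_derivable (partial b (vfield c g)).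
Proof.
move=> dbc dbg; rewrite partial_vfield.
by apply: coord_derivable_sum => a; apply: coord_derivableD; exact: coord_derivableM.
Qed.

Lemma partial_vfield_comm b q : (forall a, partial b (c a) q = 0) -> sym_hessian g q ->
  partial b (vfield c g) q = vfield c (partial b g) q.
Proof.
move=> cb0 sg; rewrite partial_vfield; apply: eq_bigr => a _.
by rewrite cb0 mul0r add0r sg.
Qed.

Lemma vfield_vfield c' q : vfield c' (vfield c g) q =
  \sum_a vfield c' (c a) q * partial a g q
  + \sum_b \sum_a c' b q * c a q * partial b (partial a g) q.
Proof.
have -> : \sum_a vfield c' (c a) q * partial a g q
    = \sum_b \sum_a c' b q * partial b (c a) q * partial a g q.
  by rewrite exchange_big; apply: eq_bigr => a _; rewrite /vfield mulr_suml.
rewrite -big_split {1}/vfield; apply: eq_bigr => b _ /=.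
by rewrite partial_vfield mulr_sumr -big_split; apply: eq_bigr => a _ /=; ring.
Qed.

End Coefficients.

Lemma vfield_commutator c c' g q :
  (forall a, coord_derivable (c a)) -> (forall a, coord_derivable (c' a)) ->
  (forall a, coord_derivable (partial a g)) -> sym_hessian g q ->
  vfield c (vfield c' g) q - vfield c' (vfield c g) q =
  \sum_a (vfield c (c' a) q - vfield c' (c a) q) * partial a g q.
Proof.
move=> dc dc' dg sg; rewrite (vfield_vfield _ _ dc' dg) (vfield_vfield _ _ dc dg).
have -> : \sum_b \sum_a c' b q * c a q * partial b (partial a g) q
    = \sum_b \sum_a c b q * c' a q * partial b (partial a g) q.
  rewrite exchange_big; apply: eq_bigr => b _; apply: eq_bigr => a _ /=.
  by rewrite [c' a q * _]mulrC sg.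
by rewrite opprD addrACA subrr addr0 -sumrB; apply: eq_bigr => a _; rewrite mulrBl.
Qed.

Section SecondDerivatives.
Variables (c : 'I_(m + d) -> P -> R) (g : P -> R).
Hypothesis dc : forall a, coord_derivable (c a).
Hypothesis dbc : forall a b, coord_derivable (partial b (c a)).
Hypothesis dg : forall a, coord_derivable (partial a g).
Hypothesis dbg : forall a b, coord_derivable (partial b (partial a g)).

Lemma partial2_vfield a b q : partial b (partial a (vfield c g)) q =
  \sum_k (partial a (c k) q * partial b (partial k g) q
           + partial k g q * partial b (partial a (c k)) q
           + (c k q * partial b (partial a (partial k g)) q
              + partial a (partial k g) q * partial b (c k) q)).
Proof.
rewrite (partial_vfield _ _ dc dg) partial_sum => [|k]; last first.
  by apply: coord_derivableD; apply: coord_derivableM.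
apply: eq_bigr => k _.
rewrite partialD; try by apply: coord_derivableM.
by rewrite (partialM (dbc k a b q) (dg k b q)) (partialM (dc k b q) (dbg k a b q)).
Qed.

Lemma sym_hessian_vfield q : (forall a, sym_hessian (c a) q) ->
  (forall a, sym_hessian (partial a g) q) -> sym_hessian (vfield c g) q.
Proof.
move=> sc sg a b; rewrite (partial2_vfield a b) (partial2_vfield b a); apply: eq_bigr => k _.
rewrite (sc k a b) (sg k a b).
(* [ring] must see the derivatives as opaque atoms. *)
move: (partial a (c k) q) (partial b (c k) q) (partial a (partial k g) q)
  (partial b (partial k g) q) (partial k g q) (partial a (partial b (c k)) q)
  (partial a (partial b (partial k g)) q) (c k q) => *; ring.
Qed.

End SecondDerivatives.

Lemma sym_hessian_of_continuous {g} : coord_derivable g ->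
  (forall a, coord_derivable (partial a g)) ->
  (forall a b, continuous (partial b (partial a g))) -> forall q, sym_hessian g q.
Proof.
move=> dg d2g c2g q a b.
exact: schwarz (dg a) (dg b) (d2g a b) (d2g b a) (c2g a b q) (c2g b a q).
Qed.

End VectorFields.

(** * The fields X_i *)

Lemma is_derive_coord (R : realType) n (k : 'I_n) (p v : 'rV[R]_n) :
  is_derive p v (fun q : 'rV[R]_n => q 0 k) (v 0 k).
Proof.
have quot_cst : ((fun h : R => h^-1 *: (((fun q : 'rV[R]_n => q 0 k) \o shift p) (h *: v)
    - p 0 k)) @ 0^' --> v 0 k)%classic.
  apply: cvg_near_cst; near=> h.
  rewrite /= !mxE addrK /GRing.scale /= mulrA mulVf ?mul1r //.
  near: h; exact: nbhs_dnbhs_neq.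
split; first by apply/cvg_ex; exists (v 0 k).
exact: cvg_lim quot_cst.
Unshelve. all: by end_near.
Qed.

Lemma split_lshift {m n} (k : 'I_m) : fintype.split (lshift n k) = inl k.
Proof. exact: (unsplitK (inl k)). Qed.

Lemma split_rshift {m n} (l : 'I_n) : fintype.split (rshift m l) = inr l.
Proof. exact: (unsplitK (inr l)). Qed.

Section HormanderFields.
Context {R : realType} {m d : nat} {sigma : 'M[R]_m} {A : 'I_d -> 'M[R]_m}.
Local Notation P := 'rV[R]_(m + d).
Local Notation e := (@ebase R m d).
Local Notation X := (Xop sigma A).

Definition Xcoef (i : 'I_m) (a : 'I_(m + d)) (q : P) : R :=
  match fintype.split a with
  | inl k => sigma k i
  | inr l => \sum_(k < m) A l i k * q 0 (lshift d k)
  end.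

Definition Xcoef_deriv (i : 'I_m) (a b : 'I_(m + d)) : R :=
  match fintype.split a with
  | inl _ => 0
  | inr l => \sum_(k < m) A l i k * e b 0 (lshift d k)
  end.

Lemma Xop_vfield i : X i = vfield (Xcoef i).
Proof.
apply/funext => g; apply/funext => q; rewrite /vfield big_split_ord /=.
by congr (_ + _); apply: eq_bigr => k _; rewrite /Xcoef ?split_lshift ?split_rshift.
Qed.

Lemma is_derive_Xcoef i a b q : is_derive q (e b) (Xcoef i a) (Xcoef_deriv i a b).
Proof.
rewrite /Xcoef /Xcoef_deriv; case: (fintype.split a) => [k|l]; first exact: is_derive_cst.
have -> : (fun x : P => \sum_(k < m) A l i k * x 0 (lshift d k))
    = \sum_(k < m) (fun x : P => A l i k * x 0 (lshift d k)).
  by apply/funext => x; rewrite fct_sumE.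
apply: is_derive_eq; first by apply: is_derive_sum => k; apply: is_deriveM; exact: is_derive_coord.
by apply: eq_bigr => k _; rewrite /GRing.scale /= mulr0 addr0.
Qed.

Lemma partial_Xcoef i a b : partial b (Xcoef i a) = cst (Xcoef_deriv i a b).
Proof. by apply/funext => q; exact: (@derive_val _ _ _ _ _ _ _ (is_derive_Xcoef i a b q)). Qed.

Lemma coord_derivable_Xcoef i a : coord_derivable (Xcoef i a).
Proof. by move=> b q; exact: (@ex_derive _ _ _ _ _ _ _ (is_derive_Xcoef i a b q)). Qed.

Lemma coord_derivable_partial_Xcoef i a b : coord_derivable (partial b (Xcoef i a)).
Proof. by rewrite partial_Xcoef => c q; exact: derivable_cst. Qed.

Lemma sym_hessian_Xcoef i a q : sym_hessian (Xcoef i a) q.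
Proof.
by move=> b c; rewrite !partial_Xcoef /partial !derive_cst.
Qed.

Lemma sum_mul_ebase (F : 'I_(m + d) -> R) x : \sum_b F b * e b 0 x = F x.
Proof.
rewrite (bigD1 x) //= big1 => [|b /negbTE bx]; first by rewrite !mxE !eqxx mulr1 addr0.
by rewrite !mxE eq_sym bx andbF mulr0.
Qed.

Lemma vfield_Xcoef i j a q : vfield (Xcoef j) (Xcoef i a) q =
  match fintype.split a with inl _ => 0 | inr l => (A l *m sigma) i j end.
Proof.
rewrite /vfield; under eq_bigr do rewrite partial_Xcoef.
rewrite /Xcoef_deriv; case: (fintype.split a) => [k|l]; first by rewrite big1 // => b; rewrite mulr0.
under eq_bigr do rewrite mulr_sumr.
rewrite exchange_big mxE; apply: eq_bigr => k _ /=.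
by under eq_bigr do rewrite mulrCA; rewrite -mulr_sumr sum_mul_ebase /Xcoef split_lshift.
Qed.

Lemma XopM i u v q : coord_derivable u -> coord_derivable v ->
  X i (fun x => u x * v x) q = u q * X i v q + v q * X i u q.
Proof. by rewrite Xop_vfield; exact: vfieldM. Qed.

Lemma XopB i u v q : coord_derivable u -> coord_derivable v ->
  X i (fun x => u x - v x) q = X i u q - X i v q.
Proof. by rewrite Xop_vfield; exact: vfieldB. Qed.

Lemma XopZ i (k : R) u q : coord_derivable u -> X i (fun x => k * u x) q = k * X i u q.
Proof. by rewrite Xop_vfield; exact: vfieldZ. Qed.

Lemma Xop_sum i n (u : 'I_n -> P -> R) q : (forall k, coord_derivable (u k)) ->
  X i (fun x => \sum_k u k x) q = \sum_k X i (u k) q.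
Proof. by rewrite Xop_vfield; exact: vfield_sum. Qed.

Lemma Lop_half_sum_sqr {n} (u : 'I_n -> P -> R) p : (forall k, coord_derivable (u k)) ->
  (forall j k, coord_derivable (X j (u k))) ->
  Lop sigma A (fun x => 2^-1 * \sum_k u k x * u k x) p =
  2^-1 * \sum_j \sum_k (X j (u k) p ^+ 2 + u k p * X j (X j (u k)) p).
Proof.
move=> du dXu; rewrite /Lop; congr (_ * _); apply: eq_bigr => j _.
have half_double (y : R) : 2^-1 * (y + y) = y by field.
have duu : forall k, coord_derivable (fun x => u k x * u k x).
  by move=> k; exact: coord_derivableM.
have -> : X j (fun x => 2^-1 * \sum_k u k x * u k x) = fun x => \sum_k u k x * X j (u k) x.
  apply/funext => x; rewrite XopZ; last exact: coord_derivable_sum.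
  rewrite Xop_sum // mulr_sumr; apply: eq_bigr => k _.
  by rewrite XopM // half_double.
rewrite Xop_sum => [|k]; last exact: coord_derivableM.
by apply: eq_bigr => k _; rewrite XopM // expr2 addrC.
Qed.

Lemma Xop_Lop i g q : (forall j, coord_derivable (X j (X j g))) ->
  X i (Lop sigma A g) q = 2^-1 * \sum_j X i (X j (X j g)) q.
Proof.
move=> dXXg; rewrite /Lop XopZ ?Xop_sum //.
by apply: coord_derivable_sum.
Qed.

Lemma partial_Lop b g q : (forall j, coord_derivable (X j (X j g))) ->
  partial b (Lop sigma A g) q = 2^-1 * \sum_j partial b (X j (X j g)) q.
Proof.
move=> dXXg; rewrite /Lop partialZ ?partial_sum // => [j|]; first exact: dXXg.
by apply: coord_derivable_sum.
Qed.

Section Regularity.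
Context {g : P -> R} (dg : forall a, coord_derivable (partial a g)).

Lemma coord_derivable_Xop i : coord_derivable (X i g).
Proof. by rewrite Xop_vfield; exact: coord_derivable_vfield (coord_derivable_Xcoef i) dg. Qed.

Lemma coord_derivable_partial_Xop i b :
  (forall a, coord_derivable (partial b (partial a g))) -> coord_derivable (partial b (X i g)).
Proof.
move=> dbg; rewrite Xop_vfield.
exact: coord_derivable_partial_vfield (coord_derivable_Xcoef i) dg _
  (fun a => coord_derivable_partial_Xcoef i a b) dbg.
Qed.

Lemma sym_hessian_Xop i q : (forall a b, coord_derivable (partial b (partial a g))) ->
  (forall a, sym_hessian (partial a g) q) -> sym_hessian (X i g) q.
Proof.
move=> dbg sg; rewrite Xop_vfield.
exact: sym_hessian_vfield (coord_derivable_Xcoef i) (coord_derivable_partial_Xcoef i) dg dbg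
  q (sym_hessian_Xcoef i ^~ q) sg.
Qed.

Lemma Xop_commutator i j q : sym_hessian g q ->
  X j (X i g) q - X i (X j g) q = \sum_(l < d) Gmat sigma A l i j * dy l g q.
Proof.
move=> sg; rewrite !Xop_vfield (vfield_commutator _ _ _ _ (coord_derivable_Xcoef j)
  (coord_derivable_Xcoef i) dg sg).
rewrite big_split_ord /= big1 ?add0r => [|k _]; last first.
  by rewrite !vfield_Xcoef split_lshift subrr mul0r.
apply: eq_bigr => l _; rewrite !vfield_Xcoef split_rshift.
by rewrite /Gmat -trmx_mul !mxE.
Qed.

Lemma dy_Xop j l q : sym_hessian g q -> dy l (X j g) q = X j (dy l g) q.
Proof.
move=> sg; rewrite /dy Xop_vfield.
apply: (partial_vfield_comm _ _ (coord_derivable_Xcoef j) dg) sg => a.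
rewrite partial_Xcoef /Xcoef_deriv /=; case: (fintype.split a) => // l'.
by rewrite big1 // => k _; rewrite !mxE eq_lrshift andbF mulr0.
Qed.

End Regularity.

End HormanderFields.

(** * Carre du champ computations *)

Section CarreDuChamp.
Context {R : realType} {m d : nat} {sigma : 'M[R]_m} {A : 'I_d -> 'M[R]_m}.
Context {f : 'rV[R]_(m + d) -> R}.
Local Notation X := (Xop sigma A).
Hypothesis d2f : forall a, coord_derivable (partial a f).
Hypothesis d3f : forall a b, coord_derivable (partial b (partial a f)).
Hypothesis sf : forall q, sym_hessian f q.
Hypothesis s2f : forall a q, sym_hessian (partial a f) q.

Let dXf i : coord_derivable (X i f) := coord_derivable_Xop d2f i.
Let d2Xf i b : coord_derivable (partial b (X i f)) := coord_derivable_partial_Xop d2f i b (d3f ^~ b).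
Let dXXf j i : coord_derivable (X j (X i f)) := coord_derivable_Xop (d2Xf i) j.
Let dXdyf j l : coord_derivable (X j (dy l f)) := coord_derivable_Xop (d3f _) j.
Let sXf i q : sym_hessian (X i f) q := sym_hessian_Xop d2f i q d3f (s2f ^~ q).

Lemma Gam2E p : Gam2 sigma A f p =
  4^-1 * \sum_i \sum_j X j (X i f) p ^+ 2
  + 4^-1 * \sum_i \sum_j X i f p * (X j (X j (X i f)) p - X i (X j (X j f)) p).
Proof.
rewrite /Gam2 /Gam (Lop_half_sum_sqr (fun i => X i f) p dXf dXXf).
under [in X in _ - X]eq_bigr do rewrite (Xop_Lop _ _ _ (fun j => dXXf j j)).
exact: gamma2_sum_identity.
Qed.

Lemma dy_Xf j l : dy l (X j f) = X j (dy l f).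
Proof. by apply/funext => q; exact: dy_Xop d2f j l q (sf q). Qed.

Lemma Gam2ZE p : Gam2Z sigma A f p = 4^-1 * \sum_j \sum_l X j (dy l f) p ^+ 2.
Proof.
rewrite /Gam2Z /GamZ (Lop_half_sum_sqr (fun l => dy l f) p (fun l => d2f _) dXdyf).
have dyLf l : dy l (Lop sigma A f) p = 2^-1 * \sum_j X j (X j (dy l f)) p.
  rewrite /dy (partial_Lop _ _ _ (fun j => dXXf j j)); congr (_ * _); apply: eq_bigr => j _.
  by rewrite -/(dy l _) (dy_Xop (d2Xf j) j l p (sXf j p)) dy_Xf.
under [in X in _ - X]eq_bigr do rewrite dyLf.
rewrite gamma2_sum_identity [X in _ + 4^-1 * X]big1 => [|l _].
  by rewrite mulr0 addr0 exchange_big.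
by rewrite big1 // => j _; rewrite subrr mulr0.
Qed.

Lemma third_order_commutator i j p :
  X j (X j (X i f)) p - X i (X j (X j f)) p = 2 * \sum_l Gmat sigma A l i j * X j (dy l f) p.
Proof.
have commute_ij : (fun x => X j (X i f) x - X i (X j f) x)
    = fun x => \sum_l Gmat sigma A l i j * dy l f x.
  by apply/funext => x; exact: Xop_commutator d2f i j x (sf x).
have outer : X j (X j (X i f)) p - X j (X i (X j f)) p
    = \sum_l Gmat sigma A l i j * X j (dy l f) p.
  rewrite -(XopB j _ _ p (dXXf j i) (dXXf i j)) commute_ij Xop_sum => [|l].
    by apply: eq_bigr => l _; exact: XopZ _ _ _ _ (d2f _).
  exact: coord_derivableZ _ (d2f _).
have inner : X j (X i (X j f)) p - X i (X j (X j f)) p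
    = \sum_l Gmat sigma A l i j * X j (dy l f) p.
  by rewrite (Xop_commutator (d2Xf j) i j p (sXf j p)); under eq_bigr do rewrite dy_Xf.
have := congr2 +%R outer inner; rewrite (subrKA (X j (X i (X j f)) p)) => ->.
by rewrite mulr_natl mulr2n.
Qed.

Lemma Gam2_lower_bound {lam r} p : (0 < m)%N -> hormander (Gmat sigma A) lam -> 0 < r ->
  Lop sigma A f p ^+ 2 / m%:R + lam / 2 * GamZ f f p / 4
    - frobenius (Gmat sigma A) / 2 / r * Gam sigma A f f p
  <= Gam2 sigma A f p + r * Gam2Z sigma A f p.
Proof.
move=> m_gt0 hG r_gt0; rewrite Gam2E Gam2ZE.
under [X in _ + 4^-1 * X]eq_bigr do under eq_bigr do rewrite third_order_commutator.
exact: gamma2_sum_bound m_gt0 hG r_gt0 (fun i j => Xop_commutator d2f i j p (sf p)).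
Qed.

End CarreDuChamp.

Theorem lemma4p2 (R : realType) (m d : nat) (hm : (2 <= m)%N) (hd : (1 <= d)%N) :
  exists c1 c2 : ('I_d -> 'M[R]_m) -> R,
  forall (sigma : 'M[R]_m) (A : 'I_d -> 'M[R]_m),
    sigma \in unitmx ->
    (exists2 lam : R, 0 < lam &
       forall a : 'I_d -> R,
         lam * \sum_(l < d) a l ^+ 2 <=
         \sum_(i < m) \sum_(j < m)
            (\sum_(l < d) Gmat sigma A l i j * a l) ^+ 2) ->
    0 < c1 (Gmat sigma A) /\ 0 < c2 (Gmat sigma A) /\
    forall f : 'rV[R]_(m + d) -> R, C3 f ->
    forall r : R, 0 < r ->
    forall p : 'rV[R]_(m + d),
      (Lop sigma A f p) ^+ 2 / m%:R
      + c2 (Gmat sigma A) * GamZ f f p / 4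
      - c1 (Gmat sigma A) / r * Gam sigma A f f p
      <= Gam2 sigma A f p + r * Gam2Z sigma A f p.
Proof.
exists (fun G => frobenius G / 2), (fun G => [get lam | hormander G lam] / 2).
move=> sigma A _ [lam lam_gt0 hG].
have [get_gt0 hget] : hormander (Gmat sigma A) [get lam | hormander (Gmat sigma A) lam].
  by apply: getPex; exists lam.
split; first by rewrite divr_gt0 // (lt_le_trans lam_gt0) // hormander_le_frobenius.
split; first by rewrite divr_gt0.
move=> f [_ [df [_ [d2f [c2f [d3f c3f]]]]]] r r_gt0 p.
have sf := sym_hessian_of_continuous df d2f c2f.
have s2f a := sym_hessian_of_continuous (d2f a) (d3f a) (c3f a).
exact: (Gam2_lower_bound (sigma := sigma) (A := A) d2f d3f sf s2f p (ltnW hm)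
  (conj get_gt0 hget) r_gt0).
Qed.
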